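(* Let $\Sigma,\Sigma',\Sigma''$ be weighted metric graphs with boundary, let $\phi\colon\Sigma\to\Sigma''$ be a continuous map, and let $\psi\colon\Sigma'\to\Sigma$ be a surjective harmonic map with $\psi(\partial\Sigma')\subset\partial\Sigma$. If $\phi\circ\psi$ is harmonic, then $\phi$ is harmonic.
   Context: Weighted metric graph with boundary: finite multigraph without loop edges, with for each oriented edge $e$ a length $\ell(e)>0$, parametrization $t_e\colon[0,\ell(e)]\to e$ ($t_e(0)=e^-$, $t_{\bar e}(x)=t_e(\ell(e)-x)$), weight $w(e)=w(\bar e)\in\mathbb Z_{>0}$, and boundary $\partial\Sigma\subset V(\Sigma)$; subdivisions allowed. A piecewise linear map $\phi\colon\Sigma'\to\Sigma$ is a continuous map such that after subdividing both: vertices map to vertices; each edge maps homeomorphically onto an edge or to a vertex; if $\phi(v')\in\partial\Sigma$ and $\phi$ is not constant on any neighbourhood of $v'$ then $v'\in\partial\Sigma'$; and if $\phi(e')=e$ (respecting orientations) then $\phi\circ t_{e'}(x)=t_e(\frac{\ell(e)}{\ell(e')}x)$. The expansion factor is $d_{e'}(\phi)=\ell(e)/\ell(e')$, or $0$ if $e'$ maps to a vertex. $\phi$ is harmonic at a point $v'$ (made a vertex) if $\sum_{e'^-=v',\,e'\mapsto e}\frac{w(e')}{w(e)}d_{e'}(\phi)$ is independent of the choice of edge $e$ starting at $\phi(v')$; $\phi$ is harmonic if it is piecewise linear and harmonic at every point of $\Sigma'\setminus\partial\Sigma'$. *)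

From HB Require Import structures.
From mathcomp Require Import all_boot all_order all_algebra.
From mathcomp Require Import reals.
Set Implicit Arguments. Unset Strict Implicit. Unset Printing Implicit Defensive.
Import Order.TTheory GRing.Theory Num.Theory.
Local Open Scope ring_scope.

(* Each (unoriented) edge e comes with a
   reference orientation msrc e -> mtgt e; the two oriented edges are (e,true)
   (= e) and (e,false) (= ebar).  Lengths and weights are attached to the
   unoriented edge, so l(ebar)=l(e), w(ebar)=w(e). *)
Record mgraph (R : realType) := MGraph {
  mV : finType;
  mE : finType;
  msrc : mE -> mV;
  mtgt : mE -> mV;
  mlen : mE -> R;
  mwt : mE -> nat;
  mbnd : pred mV;
  msrc_tgt : forall e, msrc e != mtgt e;
  mlen_gt0 : forall e, 0 < mlen e;
  mwt_gt0 : forall e, (0 < mwt e)%N }.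

(* Points: a vertex, or an interior point (e,x), 0<x<l(e), of an edge e
   (coordinate measured from msrc e). *)
Definition rawpt R (G : mgraph R) := (mV G + (mE G * R))%type.
Definition validpt R (G : mgraph R) (p : rawpt G) : bool :=
  match p with inl _ => true | inr (e, x) => (0 < x) && (x < mlen e) end.
Definition point R (G : mgraph R) := {p : rawpt G | validpt p}.

Definition vpt R (G : mgraph R) (v : mV G) : point G :=
  exist (fun p => validpt p) (inl v) isT.

Definition isbnd R (G : mgraph R) (p : point G) : bool :=
  match val p with inl v => mbnd v | inr _ => false end.

Definition oedge R (G : mgraph R) := (mE G * bool)%type.
Definition osrc R (G : mgraph R) (a : oedge G) : mV G :=
  if a.2 then msrc a.1 else mtgt a.1.
Definition otgt R (G : mgraph R) (a : oedge G) : mV G :=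
  if a.2 then mtgt a.1 else msrc a.1.
Definition olen R (G : mgraph R) (a : oedge G) : R := mlen a.1.

(* Parametrization t_a : [0, l(a)] -> G (clamped outside), with
   t_a(0) = a^-, t_abar(x) = t_a(l(a) - x). *)
Definition param R (G : mgraph R) (a : oedge G) (x : R) : point G :=
  if x <= 0 then vpt (osrc a)
  else if olen a <= x then vpt (otgt a)
  else insubd (vpt (osrc a)) (inr (a.1, if a.2 then x else mlen a.1 - x)).

(* Topology: quotient topology of the union of the edge intervals. *)
Definition gopen R (G : mgraph R) (U : point G -> Prop) : Prop :=
  forall (e : mE G) (x : R), 0 <= x <= mlen e -> U (param (e, true) x) ->
  exists2 eps : R, 0 < eps & forall y : R, 0 <= y <= mlen e ->
     `|y - x| < eps -> U (param (e, true) y).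

Definition gcontinuous R (G H : mgraph R) (f : point G -> point H) : Prop :=
  forall U : point H -> Prop, gopen U -> gopen (fun p => U (f p)).

(* Piecewise linearity: each edge of G splits into finitely many segments, on
   each of which f is constant or maps linearly (factor d > 0) into a single
   oriented edge of H, as x |-> t_b(beta + d (x - u)).  Together with the
   boundary condition this is equivalent to the "after subdividing" def. *)
Definition lin_piece R (G H : mgraph R) (f : point G -> point H)
    (a : oedge G) (u v : R) : Prop :=
  (forall x, u <= x <= v -> f (param a x) = f (param a u)) \/
  exists (b : oedge H) (beta d : R),
    [/\ 0 < d, 0 <= beta, beta + d * (v - u) <= olen b &
        forall x, u <= x <= v -> f (param a x) = param b (beta + d * (x - u))].

Definition pl_edge R (G H : mgraph R) (f : point G -> point H) (e : mE G) : Prop :=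
  exists (n : nat) (u : nat -> R),
    [/\ u 0%N = 0, u n = mlen e,
        forall i, (i < n)%N -> u i < u i.+1 &
        forall i, (i < n)%N -> lin_piece f (e, true) (u i) (u i.+1)].

Definition pl_map R (G H : mgraph R) (f : point G -> point H) : Prop :=
  [/\ gcontinuous f,
      forall e, pl_edge f e &
      forall p, isbnd (f p) ->
        ~ (exists U, [/\ gopen U, U p & forall q, U q -> f q = f p]) ->
        isbnd p].

(* Directions at a point p: oriented edges a such that p = t_a(s) with
   0 <= s < l(a); offset p a = Some s.  After making p a vertex, these are
   exactly the edges starting at p. *)
Definition offset R (G : mgraph R) (p : point G) (a : oedge G) : option R :=
  match val p with
  | inl v => if osrc a == v then Some 0 else None
  | inr (e, x) => if a.1 == e then Some (if a.2 then x else mlen e - x) else None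
  end.
Definition isdir R (G : mgraph R) (p : point G) (a : oedge G) : bool :=
  offset p a != None.

Definition germ_const R (G H : mgraph R) (f : point G -> point H)
    (p : point G) (a : oedge G) : Prop :=
  exists s, offset p a = Some s /\
  exists2 eta : R, 0 < eta & forall t, 0 <= t <= eta -> f (param a (s + t)) = f p.

Definition germ_lin R (G H : mgraph R) (f : point G -> point H)
    (p : point G) (a : oedge G) (b : oedge H) (d : R) : Prop :=
  exists s r, [/\ offset p a = Some s, offset (f p) b = Some r, 0 < d &
  exists2 eta : R, 0 < eta &
    [/\ s + eta <= olen a, r + d * eta <= olen b &
        forall t, 0 <= t <= eta -> f (param a (s + t)) = param b (r + d * t)]].

(* Harmonicity at p (made a vertex): m a = image direction, dd a = expansion
   factor d_a (0 if contracted); the sum over a |-> b of w(a)/w(b) d_a is the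
   same constant c for every direction b at f p. *)
Definition harmonic_at R (G H : mgraph R) (f : point G -> point H) (p : point G) : Prop :=
  exists (m : oedge G -> oedge H) (dd : oedge G -> R) (c : R),
  (forall a, isdir p a -> (dd a = 0 /\ germ_const f p a) \/ germ_lin f p a (m a) (dd a)) /\
  (forall b, isdir (f p) b ->
     \sum_(a | isdir p a && (m a == b)) ((mwt a.1)%:R / (mwt b.1)%:R * dd a) = c).

Definition harmonic R (G H : mgraph R) (f : point G -> point H) : Prop :=
  pl_map f /\ forall p, ~~ isbnd p -> harmonic_at f p.

From mathcomp Require Import all_boot all_order all_algebra.
From mathcomp Require Import reals boolp.
From mathcomp Require Import ring lra zify.
Set Implicit Arguments. Unset Strict Implicit. Unset Printing Implicit Defensive.
Import Order.TTheory GRing.Theory Num.Theory.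
Local Open Scope ring_scope.

(* Since psi is surjective and piecewise linear, every direction b at a point q of S lifts:
   some preimage p of q has a direction mapped linearly onto b, for otherwise each of the
   finitely many linear pieces and vertices of S' would miss a short initial segment of b,
   and so would psi.  The germ of phi along b is then the quotient of a germ of phi \o psi by
   a germ of psi, so phi is piecewise linear.  If q is interior and phi q is a boundary point,
   phi \o psi is locally constant at every (interior) preimage, so phi contracts every
   direction at q and is locally constant there.  Finally, grouping the harmonicity sum of
   phi \o psi at p by the image directions at q = psi p factors it as the sum for phi at q
   times the (positive) harmonicity constant of psi at p. *)

Section Parametrization.
Variables (R : realType) (G : mgraph R).
Implicit Types (a b : oedge G) (e : mE G) (p : point G) (x y s : R).

Definition orev a : oedge G := (a.1, ~~ a.2).

Lemma olen_gt0 a : 0 < olen a.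
Proof. exact: mlen_gt0. Qed.

Lemma orevK : involutive orev.
Proof. by case=> e o; rewrite /orev negbK. Qed.

Lemma olen_rev a : olen (orev a) = olen a.
Proof. by []. Qed.

Lemma val_param a x : 0 < x -> x < olen a ->
  val (param a x) = inr (a.1, if a.2 then x else mlen a.1 - x).
Proof.
rewrite /param /olen => x0 xl; rewrite leNgt x0 leNgt xl /= insubdK //.
by case: a.2 => /=; apply/andP; split; lra.
Qed.

Lemma param_le0 a x : x <= 0 -> param a x = vpt (osrc a).
Proof. by rewrite /param => ->. Qed.

Lemma param_ge_len a x : olen a <= x -> param a x = vpt (otgt a).
Proof.
move=> lx; have := olen_gt0 a; rewrite /param lx => l0.
by rewrite ifF //; apply/negbTE; rewrite -ltNge; lra.
Qed.

Lemma param_rev a y : param (orev a) y = param a (olen a - y).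
Proof.
have l0 := olen_gt0 a; rewrite /olen in l0.
have ends : osrc (orev a) = otgt a /\ otgt (orev a) = osrc a.
  by rewrite /osrc /otgt /orev /=; case: a.2.
case: (lerP y 0) => y0.
  by rewrite param_le0 // param_ge_len ?ends.1 // /olen; lra.
case: (lerP (olen a) y) => yl.
  by rewrite param_ge_len // param_le0 ?ends.2 //; lra.
have yl' : olen a - y < olen a by lra.
apply: val_inj; rewrite val_param // val_param //; last by lra.
by rewrite /olen /=; case: a.2 => //=; congr (inr (_, _)); lra.
Qed.

Lemma param_false e y : param (e, false) y = param (e, true) (mlen e - y).
Proof. exact: (param_rev (e, true)). Qed.

Lemma param_fwd a y : param a y = param (a.1, true) (if a.2 then y else mlen a.1 - y).
Proof. by case: a => e []; rewrite ?param_false. Qed.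

Lemma offset_param a s : 0 <= s -> s < olen a -> offset (param a s) a = Some s.
Proof.
move=> s0 sl; case: (lerP s 0) => s0'.
  by rewrite param_le0 // /offset /= eqxx; congr Some; lra.
by rewrite /offset val_param // eqxx; case: a.2 => //; congr Some; lra.
Qed.

Lemma offsetP p a s : offset p a = Some s -> [/\ p = param a s, 0 <= s & s < olen a].
Proof.
rewrite /offset; case: p => [[v|[e x]] px] /=.
  case: eqP => // <- [<-]; rewrite lexx olen_gt0; split => //.
  by rewrite param_le0 //; apply: val_inj.
case: eqP => // ae [<-]; have /andP [x0 xl] := px.
have la : olen a = mlen e by rewrite /olen ae.
have s0 : 0 < (if a.2 then x else mlen e - x) by case: a.2; lra.
have sl : (if a.2 then x else mlen e - x) < olen a by rewrite la; case: a.2; lra.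
split; [|lra|lra]; apply: val_inj; rewrite val_param //= ae.
by case: a.2 => //=; congr (inr (_, _)); lra.
Qed.

Lemma offset_rev p a s : 0 < s -> offset p a = Some s -> offset p (orev a) = Some (olen a - s).
Proof.
move=> s0 /offsetP [-> _ sl].
have -> : param a s = param (orev a) (olen a - s) by rewrite param_rev; congr param; ring.
by apply: offset_param; rewrite ?olen_rev; lra.
Qed.

Lemma vpt_inj : injective (@vpt R G).
Proof. by move=> v w /(congr1 val) [->]. Qed.

Lemma param_interior_inj e e' x y : 0 < x -> x < mlen e ->
  param (e', true) y = param (e, true) x -> e' = e /\ y = x.
Proof.
move=> x0 xl /(congr1 val); rewrite (val_param (a := (e, true))) //.
case: (lerP y 0) => [y0|y0]; first by rewrite param_le0.
case: (lerP (mlen e') y) => [yl|yl]; first by rewrite param_ge_len.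
by rewrite val_param //= => -[-> ->].
Qed.

Lemma param_interior_eq b b' y y' : 0 < y -> y < olen b -> param b y = param b' y' ->
  b'.1 = b.1 /\ (if b.2 == b'.2 then y' = y else y' = mlen b.1 - y).
Proof.
rewrite /olen (param_fwd b) (param_fwd b') => y0 yl E.
have Y0 : 0 < (if b.2 then y else mlen b.1 - y) by case: b.2; lra.
have Yl : (if b.2 then y else mlen b.1 - y) < mlen b.1 by case: b.2; lra.
have [eb eY] := param_interior_inj Y0 Yl (esym E).
by split => //; move: eY; rewrite eb; case: b.2; case: b'.2 => /=; lra.
Qed.

Lemma param_true_inj e x y : 0 <= x <= mlen e -> 0 <= y <= mlen e ->
  param (e, true) x = param (e, true) y -> x = y.
Proof.
move=> /andP[x0 xl] /andP[y0 yl] E.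
case: (boolP ((0 < x) && (x < mlen e))) => [/andP[x0' xl'] | xb].
  by case: (param_interior_inj x0' xl' (esym E)).
case: (boolP ((0 < y) && (y < mlen e))) => [/andP[y0' yl'] | yb].
  by case: (param_interior_inj y0' yl' E).
have ends z : 0 <= z -> z <= mlen e -> ~~ ((0 < z) && (z < mlen e)) ->
    (z = 0 /\ param (e, true) z = vpt (msrc e)) \/ (z = mlen e /\ param (e, true) z = vpt (mtgt e)).
  rewrite negb_and -!leNgt => z0 zl /orP[z0'|zl']; [left | right].
    by split; [lra | rewrite param_le0].
  by split; [lra | rewrite param_ge_len].
have st : vpt (msrc e) <> vpt (mtgt e) by move/vpt_inj/eqP; rewrite (negbTE (msrc_tgt e)).
case: (ends x) => // -[xv Ex]; case: (ends y) => // -[yv Ey]; try lra; exfalso; apply: st.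
  by rewrite -Ex E Ey.
by rewrite -Ey -E Ex.
Qed.

Lemma param_inj a x y : 0 <= x <= olen a -> 0 <= y <= olen a -> param a x = param a y -> x = y.
Proof.
move=> /andP[x0 xl] /andP[y0 yl]; rewrite /olen in xl yl.
rewrite (param_fwd a x) (param_fwd a y); case: a.2 => /= E.
  by apply: (param_true_inj _ _ E); apply/andP; split; lra.
suff: mlen a.1 - x = mlen a.1 - y by lra.
by apply: (param_true_inj _ _ E); apply/andP; split; lra.
Qed.

End Parametrization.

Lemma min_pos (R : realType) (x y : R) : 0 < x -> 0 < y ->
  [/\ 0 < Num.min x y, Num.min x y <= x & Num.min x y <= y].
Proof. by move=> x0 y0; rewrite lt_min x0 y0 !ge_min !lexx orbT. Qed.

Section Germs.
Variables (R : realType) (G H : mgraph R) (f : point G -> point H).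
Implicit Types (p : point G) (a : oedge G) (b : oedge H) (d : R).

Lemma germ_lin_uniq p a b d b' d' :
  germ_lin f p a b d -> germ_lin f p a b' d' -> b = b' /\ d = d'.
Proof.
move=> [s [r [sa rb d0 [eta eta0 [_ h2 h3]]]]] [s' [r' [sa' rb' d0' [eta' eta0' [_ h2' h3']]]]].
move: sa'; rewrite sa => -[es]; subst s'.
have [_ r0 _] := offsetP rb; have [_ r0' _] := offsetP rb'.
have [m0 meta meta'] := min_pos eta0 eta0'.
(* Sampling both germs at two times forces equal orientations and equal slopes. *)
have at_t t : 0 < t -> t < Num.min eta eta' -> b'.1 = b.1 /\
    (if b.2 == b'.2 then r' + d' * t = r + d * t else r' + d' * t = mlen b.1 - (r + d * t)).
  move=> t0 tm; apply: param_interior_eq; first by nra.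
    have : d * t < d * eta by nra.
    lra.
  by rewrite -h3 ?h3' //; apply/andP; split; lra.
have [e1 k1] := at_t (Num.min eta eta' / 2) ltac:(lra) ltac:(lra).
have [_ k2] := at_t (Num.min eta eta' / 4) ltac:(lra) ltac:(lra).
move: k1 k2; case: eqP => [b2 k1 k2 | _ k1 k2]; last by exfalso; clear -k1 k2 d0 d0' m0; nra.
have dd' : d = d' by nra.
by split => //; apply: injective_projections.
Qed.

Lemma germ_const_linF p a b d : germ_const f p a -> ~ germ_lin f p a b d.
Proof.
move=> [s [sa [eta eta0 h]]] [s' [r [sa' rb d0 [eta' eta0' [_ h2 h3]]]]].
move: sa'; rewrite sa => -[es]; subst s'.
have [fp r0 _] := offsetP rb.
have [m0 meta meta'] := min_pos eta0 eta0'.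
set t := Num.min eta eta' in m0 meta meta'.
have E : param b (r + d * t) = param b (r + d * 0).
  rewrite -h3; last by apply/andP; split; lra.
  by rewrite h ?mulr0 ?addr0 //; apply/andP; split; lra.
have : r + d * t = r + d * 0 by apply: param_inj E; apply/andP; split; nra.
by clear -m0 d0; nra.
Qed.

End Germs.

Section Composition.
Variables (R : realType) (G H K : mgraph R).
Variables (psi : point G -> point H) (phi : point H -> point K).
Implicit Types (p : point G) (a : oedge G) (b : oedge H) (c : oedge K) (d : R).

Lemma germ_lin_comp p a b c d1 d2 :
  germ_lin psi p a b d1 -> germ_lin phi (psi p) b c d2 ->
  germ_lin (fun x => phi (psi x)) p a c (d2 * d1).
Proof.
move=> [s [r [sa rb d10 [eta eta0 [h1 _ h3]]]]] [r' [r2 [rb' rc d20 [eta2 eta20 [_ g2 g3]]]]].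
move: rb'; rewrite rb => -[er]; subst r'.
have [m0 meta meta2] := min_pos eta0 (divr_gt0 eta20 d10).
set e := Num.min _ _ in m0 meta meta2.
have de : d1 * e <= eta2 by move: meta2; rewrite ler_pdivlMr // mulrC.
exists s, r2; split => //; first exact: mulr_gt0.
exists e => //; split; first lra.
  by rewrite -mulrA; nra.
move=> t /andP [t0 te].
rewrite h3; last by apply/andP; split; lra.
by rewrite g3 ?mulrA //; apply/andP; split; nra.
Qed.

Lemma germ_const_comp p a b d1 :
  germ_lin psi p a b d1 -> germ_const phi (psi p) b ->
  germ_const (fun x => phi (psi x)) p a.
Proof.
move=> [s [r [sa rb d10 [eta eta0 [_ _ h3]]]]] [r' [rb' [eta2 eta20 g]]].
move: rb'; rewrite rb => -[er]; subst r'.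
have [m0 meta meta2] := min_pos eta0 (divr_gt0 eta20 d10).
set e := Num.min _ _ in m0 meta meta2.
have de : d1 * e <= eta2 by move: meta2; rewrite ler_pdivlMr // mulrC.
exists s; split => //; exists e => // t /andP [t0 te].
rewrite h3; last by apply/andP; split; lra.
by rewrite g //; apply/andP; split; nra.
Qed.

Lemma germ_lin_factor p a b c d1 d :
  germ_lin psi p a b d1 -> germ_lin (fun x => phi (psi x)) p a c d ->
  germ_lin phi (psi p) b c (d / d1).
Proof.
move=> [s [r [sa rb d10 [eta eta0 [_ h2 h3]]]]] [s' [r2 [sa' rc d0 [eta2 eta20 [_ g2 g3]]]]].
move: sa'; rewrite sa => -[es]; subst s'.
have [m0 meta meta2] := min_pos eta0 eta20.
set e := Num.min _ _ in m0 meta meta2.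
exists r, r2; split => //; first exact: divr_gt0.
exists (d1 * e); first exact: mulr_gt0.
split.
- by nra.
- by rewrite mulrA divfK ?gt_eqF //; nra.
move=> t /andP [t0 te].
have t'0 : 0 <= t / d1 := divr_ge0 t0 (ltW d10).
have t'e : t / d1 <= e by rewrite ler_pdivrMr // mulrC.
have -> : t = d1 * (t / d1) by rewrite mulrC divfK ?gt_eqF.
rewrite -h3; last by apply/andP; split; lra.
rewrite g3; last by apply/andP; split; lra.
by rewrite mulrA divfK ?gt_eqF.
Qed.

Lemma germ_const_factor p a b d1 :
  germ_lin psi p a b d1 -> germ_const (fun x => phi (psi x)) p a ->
  germ_const phi (psi p) b.
Proof.
move=> [s [r [sa rb d10 [eta eta0 [_ _ h3]]]]] [s' [sa' [eta2 eta20 g]]].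
move: sa'; rewrite sa => -[es]; subst s'.
have [m0 meta meta2] := min_pos eta0 eta20.
set e := Num.min _ _ in m0 meta meta2.
exists r; split => //; exists (d1 * e); first exact: mulr_gt0.
move=> t /andP [t0 te].
have t'0 : 0 <= t / d1 := divr_ge0 t0 (ltW d10).
have t'e : t / d1 <= e by rewrite ler_pdivrMr // mulrC.
have -> : t = d1 * (t / d1) by rewrite mulrC divfK ?gt_eqF.
rewrite -h3; last by apply/andP; split; lra.
by rewrite g //; apply/andP; split; lra.
Qed.

End Composition.

Section Partitions.
Variables (R : realType) (u : nat -> R) (n : nat).
Hypothesis u_incr : forall i, (i < n)%N -> u i < u i.+1.

Lemma partition_le i j : (i <= j)%N -> (j <= n)%N -> u i <= u j.
Proof.
elim: j => [|j IH] ij jn; first by have -> : i = 0%N by lia.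
case: (ltnP i j.+1) => [ij'|ji]; last by have -> : i = j.+1 by lia.
have := u_incr jn; have := IH ltac:(lia) ltac:(lia); lra.
Qed.

Lemma partition_bounds L : u 0%N = 0 -> u n = L -> forall i, (i <= n)%N -> 0 <= u i <= L.
Proof.
by move=> u0 un i i_n; rewrite -u0 -un !partition_le.
Qed.

Lemma partition_locate_ge x : u 0%N <= x -> x < u n ->
  exists i, [/\ (i < n)%N, u i <= x & x < u i.+1].
Proof.
move=> u0x xun.
suff k_ex k : (k < n)%N -> x < u k.+1 -> exists i, [/\ (i <= k)%N, u i <= x & x < u i.+1].
  case: n u_incr xun k_ex => [|m] _ xun k_ex; first lra.
  by have [i [im ? ?]] := k_ex m (ltnSn m) xun; exists i; split => //; lia.
elim: k => [|k IH] kn xk; first by exists 0%N.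
case: (ltrP x (u k.+1)) => xk'; last by exists k.+1.
by have [i [ik ? ?]] := IH ltac:(lia) xk'; exists i; split => //; lia.
Qed.

Lemma partition_locate_le x : u 0%N < x -> x <= u n ->
  exists i, [/\ (i < n)%N, u i < x & x <= u i.+1].
Proof.
move=> u0x xun.
suff k_ex k : (k < n)%N -> x <= u k.+1 -> exists i, [/\ (i <= k)%N, u i < x & x <= u i.+1].
  case: n u_incr xun k_ex => [|m] _ xun k_ex; first lra.
  by have [i [im ? ?]] := k_ex m (ltnSn m) xun; exists i; split => //; lia.
elim: k => [|k IH] kn xk; first by exists 0%N.
case: (lerP x (u k.+1)) => xk'; last by exists k.+1.
by have [i [ik ? ?]] := IH ltac:(lia) xk'; exists i; split => //; lia.
Qed.

End Partitions.

Lemma uniform_radius (R : realType) (T : finType) (A : T -> R -> Prop) :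
  (forall x d d', 0 < d' -> d' <= d -> A x d -> A x d') ->
  (forall x, exists2 d, 0 < d & A x d) -> exists2 d, 0 < d & forall x, A x d.
Proof.
move=> A_shrink A_ex.
suff [d d0 Ad] : exists2 d, 0 < d & forall x, x \in enum T -> A x d.
  by exists d => // x; apply/Ad; rewrite mem_enum.
elim: (enum T) => [|y s [d d0 Ad]]; first by exists 1.
have [dy dy0 Ady] := A_ex y; have [m0 mdy md] := min_pos dy0 d0.
exists (Num.min dy d) => // x; rewrite inE => /orP[/eqP -> | xs].
  exact: A_shrink Ady.
exact: A_shrink (Ad x xs).
Qed.

Section LinearPieces.
Variables (R : realType) (G H : mgraph R) (f : point G -> point H).
Implicit Types (p : point G) (a : oedge G) (b : oedge H) (u v x y d : R).

Definition has_germ p a := germ_const f p a \/ exists b d, germ_lin f p a b d.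

Definition has_germs := forall p a, isdir p a -> has_germ p a.

Definition lin_map a u v b be d := [/\ 0 < d, 0 <= be, be + d * (v - u) <= olen b &
  forall x, u <= x <= v -> f (param a x) = param b (be + d * (x - u))].

Lemma lin_map_rev a u v b be d : lin_map a u v b be d ->
  lin_map (orev a) (olen a - v) (olen a - u) (orev b) (olen b - be - d * (v - u)) d.
Proof.
move=> [d0 be0 bel fl]; split => //; rewrite ?olen_rev; [nra | nra |].
move=> x /andP[x0 x1]; rewrite param_rev fl; last by apply/andP; split; lra.
by rewrite param_rev; congr param; rewrite ?olen_rev; ring.
Qed.

Lemma lin_piece_rev a u v : lin_piece f a u v -> lin_piece f (orev a) (olen a - v) (olen a - u).
Proof.
case=> [fc | [b [be [d fl]]]]; last by right; do 3 eexists; exact: lin_map_rev fl.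
left=> x /andP[x0 x1]; rewrite !param_rev !fc //; apply/andP; split; lra.
Qed.

Lemma lin_piece_sub a u v u' v' : u <= u' -> u' <= v' -> v' <= v ->
  lin_piece f a u v -> lin_piece f a u' v'.
Proof.
move=> uu' u'v' v'v [fc | [b [be [d [d0 be0 bel fl]]]]].
  left=> x /andP[x0 x1]; rewrite !fc //; apply/andP; split; lra.
right; exists b, (be + d * (u' - u)), d; split => //; [nra | nra |].
move=> x /andP[x0 x1]; rewrite fl; last by apply/andP; split; lra.
by congr param; ring.
Qed.

Lemma lin_piece_has_germ a u v x : u <= x -> x < v -> v <= olen a -> 0 <= u ->
  lin_piece f a u v -> has_germ (param a x) a.
Proof.
move=> ux xv vl u0; have xa : offset (param a x) a = Some x by apply: offset_param; lra.
case=> [fc | [b [be [d [d0 be0 bel fl]]]]].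
  left; exists x; split => //; exists (v - x); first lra.
  move=> t /andP[t0 t1]; rewrite !fc //; apply/andP; split; lra.
right; exists b, d, x, (be + d * (x - u)); split => //.
  by rewrite fl ?ux ?ltW //; apply: offset_param; nra.
exists (v - x); first lra.
split; [lra | nra |] => t /andP[t0 t1].
by rewrite fl; [congr param; ring | apply/andP; split; lra].
Qed.

Lemma has_germ_lin_piece a x : 0 <= x -> x < olen a -> has_germ (param a x) a ->
  exists y, [/\ x < y, y <= olen a & lin_piece f a x y].
Proof.
move=> x0 xl; have xa : offset (param a x) a = Some x by apply: offset_param.
case=> [[s [sa [eta eta0 fc]]] | [b [d [s [r [sa rb d0 [eta eta0 [h1 h2 h3]]]]]]]];
  move: sa; rewrite xa => -[es]; subst s.
  have xl' : 0 < olen a - x by lra.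
  have [m0 meta ml] := min_pos eta0 xl'.
  exists (x + Num.min eta (olen a - x)); split; [lra | lra |].
  left=> y /andP[y0 y1]; rewrite -[y](subrKC x) fc; last by apply/andP; split; lra.
  by rewrite -[x in param a x]addr0 fc // lexx ltW.
exists (x + eta); split; [lra | lra |].
right; exists b, r, d; split => //.
- by have [] := offsetP rb.
- by rewrite addrAC subrr add0r.
move=> y /andP[y0 y1]; rewrite -[y](subrKC x) h3; last by apply/andP; split; lra.
by rewrite addrAC subrr add0r.
Qed.

Lemma pl_has_germs : (forall e, pl_edge f e) -> has_germs.
Proof.
move=> pl p a; rewrite /isdir; case sa: (offset p a) => [s|] // _.
have [-> s0 sl] := offsetP sa.
case: a sa sl => e o sa; rewrite /olen /= => sl.
have [n [u [u0 un u_incr pieces]]] := pl e.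
have ub := partition_bounds u_incr u0 un.
case: o sa => sa.
  have [i [i_n ui si]] := partition_locate_ge u_incr (x := s)
    ltac:(by rewrite u0) ltac:(by rewrite un).
  have /andP[_ ui1] := ub i.+1 i_n; have /andP[ui0 _] := ub i (ltnW i_n).
  exact: (lin_piece_has_germ (a := (e, true))) ui si ui1 ui0 (pieces i i_n).
have [i [i_n ui si]] := partition_locate_le u_incr (x := mlen e - s)
  ltac:(by rewrite u0; lra) ltac:(by rewrite un; lra).
have /andP[_ ui1] := ub i.+1 i_n; have /andP[ui0 _] := ub i (ltnW i_n).
apply: lin_piece_has_germ (lin_piece_rev (pieces i i_n)); rewrite /olen /=; lra.
Qed.

Definition pl_prefix e y := exists (n : nat) (u : nat -> R),
  [/\ u 0%N = 0, u n = y, forall i, (i < n)%N -> u i < u i.+1 &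
      forall i, (i < n)%N -> lin_piece f (e, true) (u i) (u i.+1)].

Lemma pl_prefix0 e : pl_prefix e 0.
Proof. by exists 0%N, (fun _ => 0). Qed.

Lemma pl_prefix_ext e y y' :
  pl_prefix e y -> y < y' -> lin_piece f (e, true) y y' -> pl_prefix e y'.
Proof.
move=> [n [u [u0 un u_incr pieces]]] yy' piece.
exists n.+1, (fun i => if (i <= n)%N then u i else y'); split; rewrite ?leq0n ?ltnn //.
  move=> i i_n /=; case: (ltnP i n) => [i_lt | n_le]; first by rewrite (ltnW i_lt); apply: u_incr.
  have -> : i = n by lia.
  by rewrite leqnn ?ltnn un.
move=> i i_n /=; case: (ltnP i n) => [i_lt | n_le]; first by rewrite (ltnW i_lt); apply: pieces.
have -> : i = n by lia.
by rewrite leqnn ?ltnn un.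
Qed.

Section GermsToPieces.
Hypothesis germs : has_germs.

Lemma germ_piece_fwd e x : 0 <= x -> x < mlen e ->
  exists y, [/\ x < y, y <= mlen e & lin_piece f (e, true) x y].
Proof.
move=> x0 xl; apply: (has_germ_lin_piece (a := (e, true))) => //; apply: germs.
by rewrite /isdir offset_param.
Qed.

Lemma germ_piece_bwd e x : 0 < x -> x <= mlen e ->
  exists y, [/\ 0 <= y, y < x & lin_piece f (e, true) y x].
Proof.
move=> x0 xl.
have px : param (e, true) x = param (e, false) (mlen e - x).
  by rewrite param_false; congr param; ring.
have := has_germ_lin_piece (a := (e, false)) (x := mlen e - x).
rewrite -px /olen /=; case=> [|||y [xy yl piece]]; [lra | lra | |].
  by apply: germs; rewrite /isdir px offset_param /olen //=; lra.
exists (mlen e - y); split; [lra | lra |].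
have -> : x = mlen e - (mlen e - x) by ring.
exact: lin_piece_rev piece.
Qed.

(* The supremum of the lengths of the piecewise linear prefixes of e is attained (backward
   germ at it) and equals mlen e (forward germ at it). *)
Lemma has_germs_pl_edge e : pl_edge f e.
Proof.
pose E : classical_sets.set R := fun y => 0 <= y <= mlen e /\ pl_prefix e y.
have E0 : E 0 by split; [rewrite lexx ltW ?mlen_gt0 | exact: pl_prefix0].
have supE : classical_sets.has_sup E.
  by split; [exists 0 | exists (mlen e) => y [/andP[]]].
have sup0 : 0 <= sup E by apply: sup_upper_bound.
have supl : sup E <= mlen e by apply: ge_sup; [exists 0 | move=> y [/andP[]]].
have Esup : E (sup E).
  case: (lerP (sup E) 0) => [s0 | s0]; first by have -> : sup E = 0 by lra.
  have [y0 [y00 y0s piece]] := germ_piece_bwd s0 supl.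
  have [y Ey y0y] : exists2 y, E y & sup E - (sup E - y0) < y.
    by apply: sup_adherent supE; lra.
  have ys : y <= sup E by apply: sup_upper_bound.
  case: (ltrP y (sup E)) => [ys' | sy]; last by have -> : sup E = y by lra.
  split; first by rewrite sup0 supl.
  apply: pl_prefix_ext Ey.2 ys' _; apply: lin_piece_sub piece; lra.
suff sl : sup E = mlen e by move: Esup => [_]; rewrite sl.
case: (ltrP (sup E) (mlen e)) => [sl | ]; last lra.
have [y [sy yl piece]] := germ_piece_fwd sup0 sl.
have Ey : E y by split; [apply/andP; split; lra | exact: pl_prefix_ext Esup.2 sy piece].
by have := sup_upper_bound supE Ey; lra.
Qed.

End GermsToPieces.

End LinearPieces.

Section Lifting.
Variables (R : realType) (G H : mgraph R) (psi : point G -> point H).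
Implicit Types (p : point G) (a : oedge G) (b : oedge H) (u v x be d : R).

Lemma lin_map_lift a u v b be d s : 0 <= u -> v <= olen a ->
  lin_map psi a u v b be d -> be <= s -> s < be + d * (v - u) ->
  exists p a' d', psi p = param b s /\ germ_lin psi p a' b d'.
Proof.
move=> u0 vl [d0 be0 bel fl] bes sD.
set k := (s - be) / d.
have dk : d * k = s - be by rewrite /k mulrC divfK ?gt_eqF.
have k0 : 0 <= k by apply: divr_ge0; lra.
have kv : k < v - u by rewrite /k ltr_pdivrMr // mulrC; lra.
have fx : psi (param a (u + k)) = param b s.
  by rewrite fl; [congr param; lra | apply/andP; split; lra].
exists (param a (u + k)), a, d; split => //.
exists (u + k), s; split => //; first by apply: offset_param; lra.
  by rewrite fx; apply: offset_param; lra.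
exists (v - (u + k)); first lra.
split; [lra | nra |] => t /andP[t0 t1].
by rewrite fl; [congr param; nra | apply/andP; split; lra].
Qed.

Section Ray.
Variables (b : oedge H) (s : R).

Definition ray_hits a u v t := exists2 x, u <= x <= v & psi (param a x) = param b (s + t).

Definition ray_avoids a u v dl :=
  forall t : R, 0 < t -> t < dl -> t < olen b - s -> ~ ray_hits a u v t.

Lemma ray_avoids_shrink a u v dl dl' : 0 < dl' -> dl' <= dl ->
  ray_avoids a u v dl -> ray_avoids a u v dl'.
Proof. by move=> _ dl'dl av t t0 tdl; apply: av => //; lra. Qed.

Lemma ray_hits_rev a u v t : ray_hits a u v t -> ray_hits (orev a) (olen a - v) (olen a - u) t.
Proof.
move=> [x /andP[ux xv] fx]; exists (olen a - x); first by apply/andP; split; lra.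
by rewrite param_rev opprB addrC subrK.
Qed.

Definition ray_misses (w : point H) dl :=
  forall t : R, 0 < t -> t < dl -> t < olen b - s -> param b (s + t) != w.

Lemma ray_misses_shrink w dl dl' : 0 < dl' -> dl' <= dl -> ray_misses w dl -> ray_misses w dl'.
Proof. by move=> _ dl'dl mi t t0 tdl; apply: mi => //; lra. Qed.

Lemma ray_misses_point (w : point H) : 0 <= s -> exists2 dl : R, 0 < dl & ray_misses w dl.
Proof.
move=> s0; case: (pselect (exists t0 : R, [/\ 0 < t0, t0 < olen b - s & param b (s + t0) = w])).
  move=> [t0 [t00 t0l <-]]; exists t0 => // t t0' tt0 tl; apply/eqP => E.
  have : s + t = s + t0 by apply: (param_inj _ _ E); apply/andP; split; lra.
  lra.
move=> hit; exists 1 => // t t0 _ tl; apply/eqP => tw; apply: hit; exists t; split => //.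
Qed.

Hypothesis no_lift : ~ exists p a d, psi p = param b s /\ germ_lin psi p a b d.

Lemma lin_map_ray_avoids a u v be d : 0 <= s -> s < olen b -> 0 <= u -> v <= olen a ->
  lin_map psi a u v b be d -> exists2 dl : R, 0 < dl & ray_avoids a u v dl.
Proof.
move=> s0 sl u0 vl fl; have [d0 be0 bel fx] := fl.
have hit_eq t x : 0 < t -> t < olen b - s -> u <= x <= v ->
    psi (param a x) = param b (s + t) -> be + d * (x - u) = s + t.
  move=> t0 tl /andP[ux xv]; rewrite fx ?ux ?xv // => E.
  by apply: (param_inj _ _ E); apply/andP; split; nra.
case: (ltrP s be) => [sbe | bes].
  exists (be - s) => [|t t0 tdl tl [x xuv E]]; first lra.
  by have := hit_eq t x t0 tl xuv E; move/andP: xuv => [ux _]; nra.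
case: (ltrP s (be + d * (v - u))) => [sD | Ds].
  by exfalso; apply: no_lift; exact: lin_map_lift u0 vl fl bes sD.
exists 1 => // t t0 _ tl [x xuv E].
by have := hit_eq t x t0 tl xuv E; move/andP: xuv => [_ xv]; nra.
Qed.

Lemma lin_piece_ray_avoids a u v : 0 <= s -> s < olen b -> 0 <= u -> v <= olen a ->
  lin_piece psi a u v -> exists2 dl : R, 0 < dl & ray_avoids a u v dl.
Proof.
move=> s0 sl u0 vl [fc | [b0 [be [d fl]]]].
  have [dl dl0 av] := ray_misses_point (psi (param a u)) s0.
  exists dl => // t t0 tdl tl [x xuv E].
  by move: (av t t0 tdl tl); rewrite -E fc // eqxx.
have [e1 | ne] := eqVneq b0.1 b.1; last first.
  exists 1 => // t t0 _ tl [x xuv E]; have [_ _ _ fx] := fl; rewrite fx // in E.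
  have [] := param_interior_eq (b := b) _ _ (esym E); [lra | lra |].
  by move=> e1; rewrite e1 eqxx in ne.
have [o1 | o2] := eqVneq b0.2 b.2.
  have eb : b0 = b by apply: injective_projections.
  by rewrite eb in fl; exact: lin_map_ray_avoids fl.
have eb : b0 = orev b.
  by apply: injective_projections => //=; move: o2; case: b0.2; case: b.2.
have := lin_map_rev fl; rewrite eb orevK => fl'.
have [||dl dl0 av] := lin_map_ray_avoids s0 sl _ _ fl'; rewrite ?olen_rev; try lra.
by exists dl => // t t0 tdl tl /ray_hits_rev; apply: av.
Qed.

Lemma edge_ray_avoids e : 0 <= s -> s < olen b -> pl_edge psi e ->
  exists2 dl : R, 0 < dl & ray_avoids (e, true) 0 (mlen e) dl.
Proof.
move=> s0 sl [n [u [u0 un u_incr pieces]]].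
have ub := partition_bounds u_incr u0 un.
have piece_avoids (i : 'I_n) : exists2 dl : R, 0 < dl & ray_avoids (e, true) (u i) (u i.+1) dl.
  have /andP[ui0 _] := ub i (ltnW (ltn_ord i)); have /andP[_ ui1] := ub i.+1 (ltn_ord i).
  exact: (lin_piece_ray_avoids (a := (e, true))) s0 sl ui0 ui1 (pieces i (ltn_ord i)).
have [dl dl0 av] := uniform_radius (fun i => @ray_avoids_shrink _ _ _) piece_avoids.
exists dl => // t t0 tdl tl [x /andP[x0 xl] E].
have [i [i_n ux xu]] : exists i, [/\ (i < n)%N, u i <= x & x <= u i.+1].
  have L0 := mlen_gt0 e.
  case: (ltrP x (mlen e)) => [xL | Lx].
    have [i [? ? ?]] := partition_locate_ge u_incr (x := x)
      ltac:(by rewrite u0) ltac:(by rewrite un).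
    by exists i; split => //; lra.
  have [i [? ? ?]] := partition_locate_le u_incr (x := x)
    ltac:(rewrite u0; lra) ltac:(by rewrite un).
  by exists i; split => //; lra.
by apply: (av (Ordinal i_n) t t0 tdl tl); exists x => //; apply/andP.
Qed.

Lemma ray_uncovered : (forall e, pl_edge psi e) -> 0 <= s -> s < olen b ->
  exists2 t : R, 0 < t & forall p, psi p != param b (s + t).
Proof.
move=> pl s0 sl.
have [dE dE0 avE] := uniform_radius (fun e => @ray_avoids_shrink (e, true) 0 (mlen e))
  (fun e => edge_ray_avoids s0 sl (pl e)).
have [dV dV0 avV] := uniform_radius (fun (v : mV G) => @ray_misses_shrink (psi (vpt v)))
  (fun (v : mV G) => ray_misses_point (psi (vpt v)) s0).
have sl' : 0 < olen b - s by lra.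
have [mm0 mdE mdV] := min_pos dE0 dV0.
have [m0 mE ml] := min_pos mm0 sl'.
set t := Num.min (Num.min dE dV) (olen b - s) in m0 mE ml.
exists (t / 2) => [|[[v | [e x]] px]]; first lra.
  have -> : exist _ (inl v) px = vpt v by apply: val_inj.
  by rewrite eq_sym; apply: avV; lra.
have /andP[x0 xl] := px.
have -> : exist _ (inr (e, x)) px = param (e, true) x by apply: val_inj; rewrite val_param.
apply/eqP => E; apply: (avE e (t / 2)); try lra.
by exists x => //; apply/andP; split; lra.
Qed.

End Ray.

Lemma pl_surj_lift_dir : (forall e, pl_edge psi e) -> (forall q, exists p, psi p = q) ->
  forall q b, isdir q b -> exists p a d, psi p = q /\ germ_lin psi p a b d.
Proof.
move=> pl surj q b; rewrite /isdir; case qb: (offset q b) => [s|] // _.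
have [-> s0 sl] := offsetP qb.
apply: contrapT => no_lift.
have [t t0 uncovered] := ray_uncovered no_lift pl s0 sl.
by have [p fp] := surj (param b (s + t)); move: (uncovered p); rewrite fp eqxx.
Qed.

End Lifting.

Lemma gopen_dir (R : realType) (G : mgraph R) (U : point G -> Prop) p a s :
  gopen U -> U p -> offset p a = Some s ->
  exists2 eta : R, 0 < eta & forall t, 0 <= t <= eta -> U (param a (s + t)).
Proof.
move=> oU Up pa; have [pE s0 sl] := offsetP pa; rewrite /olen in sl.
set x := if a.2 then s else mlen a.1 - s.
have x0l : 0 <= x <= mlen a.1 by rewrite /x; case: a.2; apply/andP; split; lra.
have [eps eps0 near] := oU a.1 x x0l ltac:(by rewrite -param_fwd -pE).
have sl' : 0 < mlen a.1 - s by lra.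
have eps2 : 0 < eps / 2 by lra.
have [m0 meps ml] := min_pos eps2 sl'.
exists (Num.min (eps / 2) (mlen a.1 - s)) => // t /andP[t0 tm].
rewrite param_fwd; apply: near; rewrite /x; case: a.2 => /=;
  by rewrite ?ltr_norml; apply/andP; split; lra.
Qed.

Definition locally_const (R : realType) (G H : mgraph R) (f : point G -> point H) p :=
  exists U, [/\ gopen U, U p & forall w, U w -> f w = f p].

Section Star.
Variables (R : realType) (G H : mgraph R) (q : point G).
Implicit Types (a : oedge G) (s t x y eta : R).

Definition star eta (w : point G) := w = q \/
  exists a s t, [/\ offset q a = Some s, 0 <= t, t < eta & w = param a (s + t)].

Lemma star_param eta a s y : offset q a = Some s -> 0 <= y <= olen a -> `|y - s| < eta ->
  star eta (param a y).
Proof.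
move=> qa /andP[y0 yl]; rewrite ltr_norml => /andP[ys ys'].
have [_ s0 sl] := offsetP qa.
case: (lerP s y) => sy.
  by right; exists a, s, (y - s); split; [| lra | lra | rewrite addrC subrK].
right; exists (orev a), (olen a - s), (s - y); split; [|lra|lra|].
  by apply: offset_rev => //; lra.
by rewrite param_rev; congr param; ring.
Qed.

Definition edge_nbhd (U : point G -> Prop) e x := exists2 eps : R, 0 < eps &
  forall y, 0 <= y <= mlen e -> `|y - x| < eps -> U (param (e, true) y).

Lemma star_nbhd_true eta e s x : offset q (e, true) = Some s -> `|x - s| < eta ->
  edge_nbhd (star eta) e x.
Proof.
move=> qs xs; exists (eta - `|x - s|) => [|y yl yx]; first lra.
by apply: (star_param (a := (e, true))) qs yl _; have := ler_distD x y s; lra.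
Qed.

Lemma star_nbhd_false eta e s x : offset q (e, false) = Some s -> `|mlen e - x - s| < eta ->
  edge_nbhd (star eta) e x.
Proof.
move=> qs xs; exists (eta - `|mlen e - x - s|) => [|y /andP[y0 yl] yx]; first lra.
have -> : param (e, true) y = param (e, false) (mlen e - y).
  by rewrite param_false; congr param; ring.
apply: star_param qs _ _; first by rewrite /olen /=; apply/andP; split; lra.
have := ler_distD (mlen e - x) (mlen e - y) s.
have -> : `|mlen e - y - (mlen e - x)| = `|y - x| by rewrite distrC; congr `|_|; ring.
lra.
Qed.

Lemma star_nbhd_center eta e x : 0 < eta -> 0 <= x <= mlen e -> param (e, true) x = q ->
  edge_nbhd (star eta) e x.
Proof.
move=> eta0 /andP[x0 xl] xq; case: (ltrP x (mlen e)) => [xL | Lx].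
  by apply: (star_nbhd_true (s := x)); rewrite ?subrr ?normr0 // -xq offset_param.
have xe : x = mlen e by lra.
apply: (star_nbhd_false (s := 0)); last by rewrite xe !subrr normr0.
have -> : q = param (e, false) 0 by rewrite -xq param_false subr0 xe.
by rewrite offset_param // /olen mlen_gt0.
Qed.

Lemma star_gopen eta : 0 < eta -> (forall a s, offset q a = Some s -> s + eta <= olen a) ->
  gopen (star eta).
Proof.
move=> eta0 eta_len e x xl [xq | [a [s [t [qa t0 teta xa]]]]].
  exact: star_nbhd_center.
have [qE s0 sl] := offsetP qa; have := eta_len a s qa => seta.
case: (lerP (s + t) 0) => st0.
  by apply: star_nbhd_center => //; rewrite xa qE; congr param; lra.
have [ea] := param_interior_eq st0 ltac:(lra) (esym xa); rewrite /= in ea.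
case: a ea qa xa {qE sl seta} => a1 [] /= ea; subst a1 => qa xa xs.
  by apply: star_nbhd_true qa _; rewrite xs addrAC subrr add0r ger0_norm //; lra.
apply: star_nbhd_false qa _.
by rewrite xs (_ : _ - _ - s = t) ?ger0_norm; [lra | lra | ring].
Qed.

Lemma dirs_const_locally_const (f : point G -> point H) :
  (forall a, isdir q a -> germ_const f q a) ->
  locally_const f q.
Proof.
move=> dir_const.
pose A a eta := forall s, offset q a = Some s ->
  s + eta <= olen a /\ forall t, 0 <= t <= eta -> f (param a (s + t)) = f q.
have [|a|eta eta0 Aeta] := uniform_radius (A := A).
- move=> a eta eta' _ eta'eta Aa s qa; have [sl fc] := Aa s qa; split; first lra.
  by move=> t /andP[t0 t1]; apply: fc; apply/andP; split; lra.
- rewrite /A; case qa: (offset q a) => [s|]; last by exists 1.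
  have [s' [qa' [eta eta0 fc]]] := dir_const a ltac:(by rewrite /isdir qa).
  move: qa'; rewrite qa => -[es]; subst s'.
  have [_ _ sl] := offsetP qa; have sl' : 0 < olen a - s by lra.
  have [m0 meta ml] := min_pos eta0 sl'.
  exists (Num.min eta (olen a - s)) => // s' [<-]; split; first lra.
  by move=> t /andP[t0 t1]; apply: fc; apply/andP; split; lra.
exists (star eta); split; last 1 first.
- move=> w [-> // | [a [s [t [qa t0 teta ->]]]]].
  by apply: (Aeta a s qa).2; apply/andP; split; lra.
- by apply: star_gopen => // a s qa; have [] := Aeta a s qa.
- by left.
Qed.

End Star.

Section Factor.
Variables (R : realType) (S S' S'' : mgraph R).
Variables (phi : point S -> point S'') (psi : point S' -> point S).
Hypothesis lift : forall q b, isdir q b -> exists p a d, psi p = q /\ germ_lin psi p a b d.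

Lemma has_germs_factor : (forall e, pl_edge (fun p => phi (psi p)) e) -> has_germs phi.
Proof.
move=> plc q b qb; have [p [a [d [<- lin]]]] := lift qb.
have [s [r [pa _ _ _]]] := lin.
case: (pl_has_germs plc (a := a) (p := p)); first by rewrite /isdir pa.
  by move=> c; left; exact: germ_const_factor lin c.
by move=> [c [d' lin']]; right; exists c, (d' / d); exact: germ_lin_factor lin lin'.
Qed.

Lemma bnd_factor : (forall p, isbnd p -> isbnd (psi p)) ->
  (forall p, isbnd (phi (psi p)) -> ~ locally_const (fun p => phi (psi p)) p -> isbnd p) ->
  forall q, isbnd (phi q) -> ~ locally_const phi q -> isbnd q.
Proof.
move=> bnd_pres bnd_comp q bq not_lc; apply: contrapT => /negP qnb; apply: not_lc.
apply: dirs_const_locally_const => b qb.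
have [p [a [d [pq lin]]]] := lift qb.
have pnb : ~~ isbnd p by apply: contra qnb; rewrite -pq; exact: bnd_pres.
have [U [oU Up Uc]] : locally_const (fun p => phi (psi p)) p.
  apply: contrapT => not_lc'; have := bnd_comp p; rewrite pq => /(_ bq not_lc').
  by rewrite (negbTE pnb).
rewrite -pq; apply: (germ_const_factor lin).
have [s [r [pa _ _ _]]] := lin; have [eta eta0 near] := gopen_dir oU Up pa.
by exists s; split => //; exists eta => // t /near /Uc.
Qed.

End Factor.

Lemma sum_regroup (R : fieldType) (A B C : finType) (PA : pred A) (PB : pred B)
    (m1 : A -> B) (m : B -> C) (m2 : A -> C) (wA : A -> R) (wB : B -> R) (wC : C -> R)
    (d1 d2 : A -> R) (d : B -> R) (c1 : R) (k : C) :
  (forall b, wB b != 0) ->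
  (forall a, PA a -> d2 a = d (m1 a) * d1 a) ->
  (forall a, PA a -> d2 a != 0 -> m2 a = m (m1 a) /\ PB (m1 a)) ->
  (forall b, PB b -> \sum_(a | PA a && (m1 a == b)) wA a / wB b * d1 a = c1) ->
  \sum_(a | PA a && (m2 a == k)) wA a / wC k * d2 a =
    (\sum_(b | PB b && (m b == k)) wB b / wC k * d b) * c1.
Proof.
move=> wB0 d2E m2E sum_c1.
transitivity (\sum_(a | PA a && (PB (m1 a) && (m (m1 a) == k))) wA a / wC k * d2 a).
  rewrite [LHS]big_mkcondr [RHS]big_mkcondr; apply: eq_bigr => a PAa.
  have [-> | d2a] := eqVneq (d2 a) 0; first by rewrite mulr0 !if_same.
  by have [m2a PBm1a] := m2E a PAa d2a; rewrite m2a PBm1a.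
rewrite (partition_big m1 (fun b => PB b && (m b == k))); last by move=> a /and3P[_ -> ->].
rewrite mulr_suml; apply: eq_bigr => b /andP[PBb /eqP mbk].
rewrite -(sum_c1 b PBb) mulr_sumr; apply: eq_big => [a | a /andP[/and3P[PAa _ _] /eqP m1a]].
  by case: (eqVneq (m1 a) b) => [-> | _]; rewrite ?PBb ?mbk ?eqxx ?andbT ?andbF.
(* Generalizing (wC k)^-1 spares [field] the side condition wC k != 0. *)
rewrite d2E // m1a; move: (wC k)^-1 => X.
by field; rewrite wB0.
Qed.

Lemma wt_gt0 (R : realType) (G : mgraph R) (e : mE G) : 0 < (mwt e)%:R :> R.
Proof. by rewrite ltr0n mwt_gt0. Qed.

Section HarmonicData.
Variables (R : realType) (G H : mgraph R) (f : point G -> point H) (p : point G).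
Variables (m : oedge G -> oedge H) (dd : oedge G -> R) (c : R).
Hypothesis dd_germ : forall a, isdir p a ->
  (dd a = 0 /\ germ_const f p a) \/ germ_lin f p a (m a) (dd a).
Hypothesis dd_sum : forall b, isdir (f p) b ->
  \sum_(a | isdir p a && (m a == b)) ((mwt a.1)%:R / (mwt b.1)%:R * dd a) = c.

Lemma harmonic_dd_lin a b d : germ_lin f p a b d -> m a = b /\ dd a = d.
Proof.
move=> lin; have [s [_ [pa _ _ _]]] := lin.
case: (dd_germ (a := a)) => [|[_ cst] | lin']; first by rewrite /isdir pa.
  by have := germ_const_linF cst lin.
exact: germ_lin_uniq lin' lin.
Qed.

Lemma harmonic_dd_const a : germ_const f p a -> dd a = 0.
Proof.
move=> cst; have [s [pa _]] := cst.
case: (dd_germ (a := a)) => [|[] // | lin]; first by rewrite /isdir pa.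
by have := germ_const_linF cst lin.
Qed.

Lemma harmonic_dd_ge0 a : isdir p a -> 0 <= dd a.
Proof. by move=> pa; case: (dd_germ pa) => [[-> _] // | [s [r [_ _ d0 _]]]]; exact: ltW. Qed.

Lemma harmonic_const_gt0 a b d : germ_lin f p a b d -> 0 < c.
Proof.
move=> lin; have [ma dda] := harmonic_dd_lin lin.
have [s [r [pa fpb d0 _]]] := lin.
have pa' : isdir p a by rewrite /isdir pa.
rewrite -(dd_sum (b := b)); last by rewrite /isdir fpb.
rewrite (bigD1 a) /=; last by rewrite pa' ma eqxx.
apply: ltr_wpDr; first apply: sumr_ge0 => a' /andP[/andP[pa'' _] _].
  by rewrite mulr_ge0 ?divr_ge0 ?ler0n ?harmonic_dd_ge0.
by rewrite dda mulr_gt0 ?divr_gt0 ?wt_gt0.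
Qed.

End HarmonicData.

Lemma harmonic_at_isolated (R : realType) (G H : mgraph R) (f : point G -> point H) p :
  (forall a, ~~ isdir p a) -> (oedge G -> inhabited (oedge H)) -> harmonic_at f p.
Proof.
move=> iso inh; have [m] : inhabited (oedge G -> oedge H).
  case: (pselect (inhabited (oedge G))) => [[a] | none]; last by constructor=> a; case: none.
  by have [k] := inh a; exact: inhabits (fun=> k).
exists m, (fun=> 0), 0; split => [a | b _]; first by rewrite (negbTE (iso a)).
by apply: big_pred0 => a; rewrite (negbTE (iso a)).
Qed.

Section HarmonicFactor.
Variables (R : realType) (S S' S'' : mgraph R).
Variables (phi : point S -> point S'') (psi : point S' -> point S) (p : point S').
Variables (m1 : oedge S' -> oedge S) (dd1 : oedge S' -> R).
Variables (m2 : oedge S' -> oedge S'') (dd2 : oedge S' -> R) (c2 : R).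
Variables (m : oedge S -> oedge S'') (dd : oedge S -> R).
Hypothesis dd1_germ : forall a, isdir p a ->
  (dd1 a = 0 /\ germ_const psi p a) \/ germ_lin psi p a (m1 a) (dd1 a).
Hypothesis dd2_germ : forall a, isdir p a ->
  (dd2 a = 0 /\ germ_const (fun x => phi (psi x)) p a) \/
  germ_lin (fun x => phi (psi x)) p a (m2 a) (dd2 a).
Hypothesis dd2_sum : forall b, isdir (phi (psi p)) b ->
  \sum_(a | isdir p a && (m2 a == b)) ((mwt a.1)%:R / (mwt b.1)%:R * dd2 a) = c2.
Hypothesis dd_germ : forall b, isdir (psi p) b ->
  (dd b = 0 /\ germ_const phi (psi p) b) \/ germ_lin phi (psi p) b (m b) (dd b).

Lemma harmonic_dd_comp a : isdir p a ->
  dd2 a = dd (m1 a) * dd1 a /\ (dd2 a != 0 -> m2 a = m (m1 a) /\ isdir (psi p) (m1 a)).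
Proof.
have dd2_const : germ_const (fun x => phi (psi x)) p a -> dd2 a = 0.
  by move=> cst; apply: (harmonic_dd_const dd2_germ cst).
move=> pa; case: (dd1_germ pa) => [[-> [s [ps [eta eta0 cst]]]] | lin1].
  rewrite mulr0 dd2_const ?eqxx //.
  by exists s; split => //; exists eta => // t /cst ->.
have qm1 : isdir (psi p) (m1 a) by have [s [r [_ qr _ _]]] := lin1; rewrite /isdir qr.
case: (dd_germ qm1) => [[-> cst] | lin].
  by rewrite mul0r dd2_const ?eqxx //; exact: germ_const_comp lin1 cst.
have [<- <-] := harmonic_dd_lin dd2_germ (germ_lin_comp lin1 lin).
by split.
Qed.

End HarmonicFactor.

Lemma harmonic_at_factor (R : realType) (S S' S'' : mgraph R)
    (phi : point S -> point S'') (psi : point S' -> point S) p a0 b0 d0 :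
  has_germs phi -> germ_lin psi p a0 b0 d0 -> harmonic_at psi p ->
  harmonic_at (fun x => phi (psi x)) p -> harmonic_at phi (psi p).
Proof.
move=> germs lin0 [m1 [dd1 [c1 [g1 s1]]]] [m2 [dd2 [c2 [g2 s2]]]].
have c1_gt0 := harmonic_const_gt0 g1 s1 lin0.
have [md md_germ] : {md : oedge S -> oedge S'' * R & forall b, isdir (psi p) b ->
    ((md b).2 = 0 /\ germ_const phi (psi p) b) \/ germ_lin phi (psi p) b (md b).1 (md b).2}.
  apply: (choice (P := fun b (x : oedge S'' * R) => isdir (psi p) b ->
    (x.2 = 0 /\ germ_const phi (psi p) b) \/ germ_lin phi (psi p) b x.1 x.2)) => b.
  case qb: (isdir (psi p) b); last by exists (m2 a0, 0).
  case: (germs _ _ qb) => [cst | [k [d lin]]]; first by exists (m2 a0, 0) => _; left.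
  by exists (k, d) => _; right.
exists (fun b => (md b).1), (fun b => (md b).2), (c2 / c1); split => // k qk.
pose w (T : mgraph R) (e : oedge T) : R := (mwt e.1)%:R.
rewrite -(s2 k qk) (sum_regroup (PB := isdir (psi p)) (m1 := m1) (m := fun b => (md b).1)
  (wA := @w S') (wB := @w S) (d1 := dd1) (d := fun b => (md b).2) (c1 := c1) (@w S'') k)
  ?mulfK ?gt_eqF //.
- by move=> e; rewrite gt_eqF ?wt_gt0.
- by move=> a pa; have [] := harmonic_dd_comp g1 g2 md_germ pa.
- by move=> a pa; have [_] := harmonic_dd_comp g1 g2 md_germ pa.
Qed.

Lemma oedge_inhabited_factor (R : realType) (S S' S'' : mgraph R)
    (phi : point S -> point S'') (psi : point S' -> point S) :
  (forall q b, isdir q b -> exists p a d, psi p = q /\ germ_lin psi p a b d) ->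
  (forall p, isbnd p -> isbnd (psi p)) ->
  (forall p, ~~ isbnd p -> harmonic_at (fun x => phi (psi x)) p) ->
  oedge S -> inhabited (oedge S'').
Proof.
move=> lift bnd_pres harmc a; have l0 := olen_gt0 a.
have mid : isdir (param a (olen a / 2)) a by rewrite /isdir offset_param //; lra.
have [p [a' [_ [pq _]]]] := lift _ _ mid.
have pnb : ~~ isbnd p by apply: contra (@bnd_pres p) _; rewrite pq /isbnd val_param //; lra.
by have [m _] := harmc p pnb; exact: inhabits (m a').
Qed.

Theorem lemma3p10 (R : realType) (S S' S'' : mgraph R)
    (phi : point S -> point S'') (psi : point S' -> point S) :
  gcontinuous phi ->
  harmonic psi ->
  (forall q : point S, exists p : point S', psi p = q) ->
  (forall p : point S', isbnd p -> isbnd (psi p)) ->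
  harmonic (fun p => phi (psi p)) ->
  harmonic phi.
Proof.
move=> cont [[_ pl _] harm] surj bnd_pres [[_ plc bndc] harmc].
have lift := pl_surj_lift_dir pl surj.
have germs := has_germs_factor lift plc.
split; first split => //.
- exact: has_germs_pl_edge germs.
- exact: bnd_factor lift bnd_pres bndc.
move=> q qnb; case: (pselect (exists b, isdir q b)) => [[b qb] | iso].
  have [p [a [d [pq lin]]]] := lift q b qb.
  have pnb : ~~ isbnd p by apply: contra (@bnd_pres p) _; rewrite pq.
  by rewrite -pq; exact: harmonic_at_factor germs lin (harm p pnb) (harmc p pnb).
apply: harmonic_at_isolated; first by move=> b; apply/negP => qb; apply: iso; exists b.
exact: oedge_inhabited_factor lift bnd_pres harmc.
Qed.
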